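(* Let $\mathbb{K}$ be a field of characteristic zero, $\delta\in\mathbb{K}$, and $\lambda$ a bipartition. (i) Suppose that for every $\mu\in\operatorname{Rem}^\bullet(\lambda)$ there exists $\nu\in\operatorname{Add}^\circ(\lambda)$ with $D_{\nu,\mu}(\delta)=1$. Then $x_\lambda(\delta)$ has no pair of adjacent vertices $j,j+1$ labelled $(\vee,\wedge)$, $(\bigcirc,\wedge)$, or $(\vee,\times)$. (ii) Suppose that for every $\mu\in\operatorname{Rem}^\circ(\lambda)$ there exists $\nu\in\operatorname{Add}^\bullet(\lambda)$ with $D_{\nu,\mu}(\delta)=1$. Then $x_\lambda(\delta)$ has no pair of adjacent vertices $j,j+1$ labelled $(\vee,\wedge)$, $(\vee,\bigcirc)$, or $(\times,\wedge)$.
   Context: A partition is a weakly decreasing sequence $\alpha=(\alpha_1,\alpha_2,\dots)$ of nonnegative integers, almost all zero. A bipartition is a pair $\lambda=(\lambda^\bullet,\lambda^\circ)$ of partitions. $\operatorname{Add}^\bullet(\lambda)$ (resp. $\operatorname{Add}^\circ(\lambda)$) is the set of bipartitions obtained from $\lambda$ by adding a box to $\lambda^\bullet$ (resp. $\lambda^\circ$). $\operatorname{Rem}^\bullet(\lambda)$ and $\operatorname{Rem}^\circ(\lambda)$ are defined likewise by removing a box. Set $I_\wedge(\lambda)=\{\lambda^\bullet_i-(i-1):i\ge1\}$ and $I_\vee(\lambda,\delta)=\{i-\delta-\lambda^\circ_i:i\ge1\}$. The weight diagram $x_\lambda(\delta)$ labels each integer $j$ by: - $\bigcirc$ if $j$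 is in neither set; - $\wedge$ if $j$ is only in $I_\wedge(\lambda)$; - $\vee$ if $j$ is only in $I_\vee(\lambda,\delta)$; - $\times$ if $j$ is in both. The cap diagram $c_\lambda(\delta)$ is built from $x_\lambda(\delta)$ iteratively. At each step, draw a cap connecting $i<j$ whenever $i$ is labelled $\vee$, $j$ is labelled $\wedge$, and every integer strictly between them is labelled $\bigcirc$ or $\times$ or already lies on an earlier cap. Repeat until no more caps can be drawn. Vertices joined by a cap are connected. $x_\mu(\delta)$ is linked to $x_\lambda(\delta)$ if it is obtained from $x_\lambda(\delta)$ by interchanging labels on finitely many pairs of connected vertices. $D_{\lambda,\mu}(\delta)=1$ if $x_\mu(\delta)$ is linked to $x_\lambda(\delta)$, and $0$ otherwise. *)

From mathcomp Require Import all_boot all_algebra.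
Set Implicit Arguments. Unset Strict Implicit. Unset Printing Implicit Defensive.
Import GRing.Theory Num.Theory.
Local Open Scope ring_scope.

(* A partition is represented canonically as the finite list of its nonzero
   parts, weakly decreasing; alpha_i (i >= 1) is [part alpha i]. *)
Definition is_partition (a : seq nat) : Prop :=
  sorted geq a /\ all (fun x => (0 < x)%N) a.

Definition part (a : seq nat) (i : nat) : nat := nth 0%N a i.-1.

Definition bipart := (seq nat * seq nat)%type.
Definition bul (l : bipart) := l.1.
Definition cir (l : bipart) := l.2.
Definition is_bipart (l : bipart) : Prop := is_partition (bul l) /\ is_partition (cir l).

Definition add_box (a b : seq nat) : Prop :=
  exists k, (1 <= k)%N /\ part b k = (part a k).+1 /\
            forall i, (1 <= i)%N -> i != k -> part b i = part a i.

Definition AddB (l m : bipart) : Prop :=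
  is_bipart m /\ add_box (bul l) (bul m) /\ cir m = cir l.
Definition AddC (l m : bipart) : Prop :=
  is_bipart m /\ add_box (cir l) (cir m) /\ bul m = bul l.
Definition RemB (l m : bipart) : Prop :=
  is_bipart m /\ add_box (bul m) (bul l) /\ cir m = cir l.
Definition RemC (l m : bipart) : Prop :=
  is_bipart m /\ add_box (cir m) (cir l) /\ bul m = bul l.

Section Weight.
Variable K : fieldType.

Definition inW (l : bipart) (j : int) : Prop :=
  exists i, (1 <= i)%N /\ j = (part (bul l) i)%:Z - (i.-1)%:Z.

Definition inV (l : bipart) (d : K) (j : int) : Prop :=
  exists i, (1 <= i)%N /\ (j%:~R : K) = i%:R - d - (part (cir l) i)%:R.

Inductive label := LCirc | LUp (* wedge *) | LDown (* vee *) | LCross.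

Definition is_label (l : bipart) (d : K) (j : int) (lab : label) : Prop :=
  match lab with
  | LCirc => ~ inW l j /\ ~ inV l d j
  | LUp => inW l j /\ ~ inV l d j
  | LDown => ~ inW l j /\ inV l d j
  | LCross => inW l j /\ inV l d j
  end.

(* capped l d n i j : the cap (i,j) has been drawn within the first n steps *)
Fixpoint capped (l : bipart) (d : K) (n : nat) (i j : int) : Prop :=
  match n with
  | 0%N => False
  | n'.+1 =>
      capped l d n' i j \/
      (i < j /\ is_label l d i LDown /\ is_label l d j LUp /\
          ~ (exists a b, capped l d n' a b /\ (i = a \/ i = b)) /\
          ~ (exists a b, capped l d n' a b /\ (j = a \/ j = b)) /\
          forall k, i < k < j ->
            is_label l d k LCirc \/ is_label l d k LCross \/
            (exists a b, capped l d n' a b /\ (k = a \/ k = b)))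
  end.

Definition cap (l : bipart) (d : K) (i j : int) : Prop := exists n, capped l d n i j.

Definition swap_label (S : seq (int * int)) (j : int) (lab : label) : label :=
  if has (fun p => p.1 == j) S then LUp
  else if has (fun p => p.2 == j) S then LDown else lab.

(* D_{l,m}(d) = 1 : x_m(d) is linked to x_l(d) *)
Definition D_one (l m : bipart) (d : K) : Prop :=
  exists S : seq (int * int),
    (forall p, p \in S -> cap l d p.1 p.2) /\
    forall j lab, is_label l d j lab -> is_label m d j (swap_label S j lab).

End Weight.

From mathcomp Require Import all_boot all_algebra.
From mathcomp Require Import zify ring.
From Stdlib Require Import Classical.
Import GRing.Theory Num.Theory.
Set Implicit Arguments. Unset Strict Implicit.

(* Linking only swaps the labels of the two ends of caps, i.e. vee and wedge,
   so the circle and cross labels of x_mu and x_nu agree whenever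
   D_{nu,mu} = 1.  For (i), a wedge at j+1 preceded by a non-wedge at j comes
   from a removable box in some row of lambda^bullet; removing it moves that
   wedge to j.  In the resulting mu, either j becomes a cross (if j was a vee)
   or j+1 becomes a circle (if j+1 was not a vee); a nu in Add^circ(lambda) has
   the same wedges as lambda, so it can carry neither label.  Part (ii) is the
   same argument for lambda^circ, which moves a vee from j to j+1; comparing
   the positions i - delta - lambda^circ_i needs characteristic zero. *)

Lemma nth_sorted_geq (a : seq nat) m n :
  sorted geq a -> (m <= n)%N -> (nth 0 a n <= nth 0 a m)%N.
Proof.
move=> Ha le_mn; have [lt_n|ge_n] := ltnP n (size a); last by rewrite nth_default.
apply: (sorted_leq_nth (fun _ _ _ h1 h2 => leq_trans h2 h1) leqnn 0 Ha) => //;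
  rewrite inE; lia.
Qed.

Lemma part_geq (a : seq nat) m n :
  sorted geq a -> (m <= n)%N -> (part a n <= part a m)%N.
Proof. by move=> Ha le_mn; apply: nth_sorted_geq => //; lia. Qed.

Lemma part_shift_inj (a : seq nat) m n :
  sorted geq a -> (m + part a n)%N = (n + part a m)%N -> m = n.
Proof.
move=> Ha E; case: (ltngtP m n) => [lt_mn|lt_nm|//].
- by have := part_geq Ha (ltnW lt_mn); lia.
- by have := part_geq Ha (ltnW lt_nm); lia.
Qed.

Lemma nth_filter_gt0 (s : seq nat) k :
  sorted geq s -> nth 0 [seq x <- s | (0 < x)%N] k = nth 0 s k.
Proof.
elim: s k => [|x s IH] k //= Hs; have Hs' := path_sorted Hs.
case: (posnP x) => [x0|x_gt0]; last by case: k => //= k; apply: IH.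
have s0 n : nth 0 s n = 0%N.
  by have := nth_sorted_geq (Hs : sorted geq (x :: s)) (leq0n n.+1); rewrite /= x0; lia.
by rewrite x0 /= IH //; case: k => [|k] /=; rewrite !s0.
Qed.

(* Lowering row [i] by one and dropping a resulting zero part keeps the list
   a partition exactly because row [i+1] is shorter. *)
Lemma partition_remove_box (a : seq nat) i :
  is_partition a -> (1 <= i)%N -> (part a i.+1 < part a i)%N ->
  exists b, is_partition b /\ part b i = (part a i).-1 /\
    forall k, (1 <= k)%N -> k != i -> part b k = part a k.
Proof.
move=> [Ha _] i_ge1 lt_row.
set s := set_nth 0%N a i.-1 (part a i).-1.
have sE n : nth 0 s n = if n == i.-1 then (part a i).-1 else nth 0 a n.
  by rewrite nth_set_nth.
have Hs : sorted geq s.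
  apply/(sortedP 0%N) => n _; rewrite !sE.
  have := nth_sorted_geq Ha (leqnSn n); rewrite /part /= in lt_row.
  case: eqVneq => [e1|_]; case: eqVneq => [e2|_] //= step.
  - have -> : n.+1 = i by lia.
    rewrite /part; lia.
  - by rewrite /part -e2; lia.
exists [seq x <- s | (0 < x)%N]; split; [split|split].
- by apply: sorted_filter => // x y z h1 h2; apply: leq_trans h2 h1.
- exact: filter_all.
- by rewrite /part nth_filter_gt0 // sE eqxx.
- move=> k k_ge1 k_ne_i; rewrite /part nth_filter_gt0 // sE.
  by case: eqVneq => // e; case/eqP: k_ne_i; lia.
Qed.

Lemma remove_box_shift (a b : seq nat) i k :
  sorted geq a -> (0 < part a i)%N -> part b i = (part a i).-1 ->
  (forall k, (1 <= k)%N -> k != i -> part b k = part a k) ->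
  (1 <= k)%N -> (k + part a i)%N <> (i + part b k)%N.
Proof.
move=> Ha a_gt0 b_i b_k k_ge1 E.
have [e|k_ne_i] := eqVneq k i; first by move: E; rewrite e b_i; lia.
by move: E; rewrite b_k // => /(part_shift_inj Ha) /eqP; rewrite (negPf k_ne_i).
Qed.

Local Open Scope ring_scope.

Lemma pchar0_natr_inj (K : fieldType) (m n : nat) :
  [pchar K] =i pred0 -> (m%:R : K) = n%:R -> m = n.
Proof.
move=> HK; wlog le_mn : m n / (m <= n)%N.
  by move=> W E; case: (leqP m n) => [|/ltnW] h; [apply: W | symmetry; apply: W].
move=> E; have : ((n - m)%N%:R : K) = 0 by rewrite natrB // E subrr.
by move/eqP; rewrite ((pcharf0P K).1 HK) subn_eq0 => h; apply/eqP; rewrite eqn_leq le_mn.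
Qed.

Lemma shifted_natr_eq (K : fieldType) (d : K) (m n x y : nat) :
  [pchar K] =i pred0 ->
  m%:R - d - x%:R = n%:R - d - y%:R :> K -> (m + y)%N = (n + x)%N.
Proof.
move=> HK E; apply: (pchar0_natr_inj HK); apply/eqP; rewrite -subr_eq0 !natrD.
have -> : m%:R + y%:R - (n%:R + x%:R) =
          (m%:R - d - x%:R) - (n%:R - d - y%:R) :> K by ring.
by rewrite E subrr.
Qed.

Section Labels.
Variable K : fieldType.
Implicit Types (l m n : bipart) (d : K) (j : int).

Lemma is_label_exists l d j : exists lab, is_label l d j lab.
Proof.
by case: (classic (inW l j)) => hw; case: (classic (inV l d j)) => hv;
  [exists LCross | exists LUp | exists LDown | exists LCirc].
Qed.

Lemma is_label_uniq l d j lab lab' :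
  is_label l d j lab -> is_label l d j lab' -> lab = lab'.
Proof. by case: lab; case: lab' => //=; tauto. Qed.

Lemma D_one_is_label n m d j lab : lab <> LUp -> lab <> LDown ->
  D_one n m d -> is_label m d j lab -> is_label n d j lab.
Proof.
move=> nUp nDown [S [_ link]] hm; have [lab' hn] := is_label_exists n d j.
have := is_label_uniq (link _ _ hn) hm; rewrite /swap_label.
case: ifP => _ E; first by case: (nUp (esym E)).
by move: E; case: ifP => _ E; [case: (nDown (esym E)) | rewrite -E].
Qed.

Lemma RemB_move_wedge l j : is_bipart l ->
  ~ inW l j -> inW l (j + 1) ->
  exists m, RemB l m /\ inW m j /\ ~ inW m (j + 1).
Proof.
move=> [Ha Hc] nWj [i [i_ge1 Wj1]]; have mono := part_geq Ha.1.
have lt_row : (part (bul l) i.+1 < part (bul l) i)%N.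
  have := mono _ _ (leqnSn i); rewrite leq_eqVlt => /orP[/eqP e|] //.
  by case: nWj; exists i.+1; split => //; rewrite e; lia.
have [b [Hb [b_i b_k]]] := partition_remove_box Ha i_ge1 lt_row.
exists (b, cir l); split; [|split].
- split; first by split.
  split=> //; exists i; split=> //; split; last by move=> k ? ?; rewrite b_k.
  by rewrite b_i; lia.
- by exists i; split => //; rewrite /bul /= b_i; lia.
- move=> [k [k_ge1 Wk]]; rewrite /bul /= in Wk.
  by apply: (remove_box_shift Ha.1 _ b_i b_k k_ge1); lia.
Qed.

Lemma RemC_move_vee l d j : [pchar K] =i pred0 -> is_bipart l ->
  inV l d j -> ~ inV l d (j + 1) ->
  exists m, RemC l m /\ ~ inV m d j /\ inV m d (j + 1).
Proof.
move=> HK [Ha Hc] [i [i_ge1 Vj]] nVj1; have mono := part_geq Hc.1.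
have lt_row : (part (cir l) i.+1 < part (cir l) i)%N.
  have := mono _ _ (leqnSn i); rewrite leq_eqVlt => /orP[/eqP e|] //.
  by case: nVj1; exists i.+1; split => //; rewrite e intrD Vj -addn1 natrD; ring.
have [b [Hb [b_i b_k]]] := partition_remove_box Hc i_ge1 lt_row.
have c_i_gt0 : (0 < part (cir l) i)%N by lia.
exists (bul l, b); split; [|split].
- split; first by split.
  split=> //; exists i; split=> //; split; last by move=> k ? ?; rewrite b_k.
  by rewrite b_i; lia.
- move=> [k [k_ge1 Vk]]; rewrite /cir /= Vj in Vk.
  exact: (remove_box_shift Hc.1 c_i_gt0 b_i b_k k_ge1 (shifted_natr_eq HK (esym Vk))).
- exists i; split => //; rewrite /cir /= b_i intrD Vj -subn1 natrB //; ring.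
Qed.

Lemma RemB_linked_forbids l d j : is_bipart l ->
  (forall m, RemB l m -> exists n, AddC l n /\ D_one n m d) ->
  ~ inW l j -> inW l (j + 1) -> inV l d j \/ ~ inV l d (j + 1) -> False.
Proof.
move=> Hl linked nWj Wj1 Vj_or_nVj1.
have [m [Hm [Wmj nWmj1]]] := RemB_move_wedge Hl nWj Wj1.
have [n [[_ [_ n_bul]] Dnm]] := linked _ Hm.
have [_ [_ m_cir]] := Hm; have W_n k : inW n k <-> inW l k by rewrite /inW n_bul.
have V_m k : inV m d k <-> inV l d k by rewrite /inV m_cir.
case: Vj_or_nVj1 => [Vj|nVj1].
- have [/W_n Wj _] : is_label n d j LCross.
    by apply: (D_one_is_label _ _ Dnm) => //; split => //; apply/V_m.
  exact: nWj.
- have [/W_n nWj1 _] : is_label n d (j + 1) LCirc.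
    by apply: (D_one_is_label _ _ Dnm) => //; split => // /V_m.
  exact: nWj1.
Qed.

Lemma RemC_linked_forbids l d j : [pchar K] =i pred0 -> is_bipart l ->
  (forall m, RemC l m -> exists n, AddB l n /\ D_one n m d) ->
  inV l d j -> ~ inV l d (j + 1) -> ~ inW l j \/ inW l (j + 1) -> False.
Proof.
move=> HK Hl linked Vj nVj1 nWj_or_Wj1.
have [m [Hm [nVmj Vmj1]]] := RemC_move_vee HK Hl Vj nVj1.
have [n [[_ [_ n_cir]] Dnm]] := linked _ Hm.
have [_ [_ m_bul]] := Hm; have V_n k : inV n d k <-> inV l d k by rewrite /inV n_cir.
have W_m k : inW m k <-> inW l k by rewrite /inW m_bul.
case: nWj_or_Wj1 => [nWj|Wj1].
- have [_ /V_n nVj] : is_label n d j LCirc.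
    by apply: (D_one_is_label _ _ Dnm) => //; split => // /W_m.
  exact: nVj.
- have [_ /V_n Vj1] : is_label n d (j + 1) LCross.
    by apply: (D_one_is_label _ _ Dnm) => //; split => //; apply/W_m.
  exact: nVj1.
Qed.

End Labels.

Theorem proposition2p5 (K : fieldType) (HK : [pchar K] =i pred0) (d : K)
    (l : bipart) (Hl : is_bipart l) :
  ((forall m, RemB l m -> exists n, AddC l n /\ D_one n m d) ->
     ~ exists j : int,
         (is_label l d j LDown /\ is_label l d (j + 1) LUp) \/
         (is_label l d j LCirc /\ is_label l d (j + 1) LUp) \/
         (is_label l d j LDown /\ is_label l d (j + 1) LCross)) /\
  ((forall m, RemC l m -> exists n, AddB l n /\ D_one n m d) ->
     ~ exists j : int,
         (is_label l d j LDown /\ is_label l d (j + 1) LUp) \/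
         (is_label l d j LDown /\ is_label l d (j + 1) LCirc) \/
         (is_label l d j LCross /\ is_label l d (j + 1) LUp)).
Proof.
split=> linked [j labels].
- by apply: (RemB_linked_forbids (j := j) Hl linked); move: labels => /=; tauto.
- by apply: (RemC_linked_forbids (j := j) HK Hl linked); move: labels => /=; tauto.
Qed.
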